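(* For every $n\ge1$, the half space $\mathbb R^n_+=\{(x_1,\dots,x_n)\in\mathbb R^n: x_n\ge0\}$ with the Euclidean metric is an absolute extensor in the category $\mathcal A$ and in the category $\tilde{\mathcal A}$.
   Context: A metric space is proper if all closed balls are compact; a map is proper if preimages of compact sets are compact; a map $f:X\to Y$ of metric spaces is asymptotically Lipschitz if there are $\lambda,s\ge0$ with $d_Y(f(x),f(x'))\le\lambda d_X(x,x')+s$ for all $x,x'$. The category $\mathcal A$ has proper metric spaces as objects and continuous proper asymptotically Lipschitz maps as morphisms. The category $\tilde{\mathcal A}$ has the same objects; its morphisms are morphisms $f:X\to Y$ of $\mathcal A$ with nonzero norm, meaning: for base points $x_0\in X$, $y_0\in Y$ there exist $c>0$, $b\ge0$ with $d_Y(f(x),y_0)\ge c\,d_X(x,x_0)-b$ for all $x\in X$ (independent of base points). An object $Y$ is an absolute extensor in such a category if for every object $X$, every closed subset $A\subset X$ with the induced metric, and every morphism $\phi:A\to Y$, there is a morphism $\bar\phi:X\to Y$ with $\bar\phi|_A=\phi$. *)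

From Stdlib Require Import Reals List.
From mathcomp Require Import ssreflect ssrfun ssrbool eqtype ssrnat seq fintype bigop.

Open Scope R_scope.

Record MSpace := { pt : Type; dist : pt -> pt -> R }.

Arguments dist {_} _ _.

Definition is_metric (X : MSpace) : Prop :=
  (forall x y : pt X, dist x y = 0 <-> x = y) /\
  (forall x y : pt X, dist x y = dist y x) /\
  (forall x y z : pt X, dist x z <= dist x y + dist y z).

Definition open_set {X : MSpace} (U : pt X -> Prop) : Prop :=
  forall x, U x -> exists e, 0 < e /\ forall y, dist x y < e -> U y.

Definition closed_set {X : MSpace} (A : pt X -> Prop) : Prop :=
  open_set (fun x => ~ A x).

Definition compact_set {X : MSpace} (K : pt X -> Prop) : Prop :=
  forall (I : Type) (U : I -> pt X -> Prop),
    (forall i, open_set (U i)) ->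
    (forall x, K x -> exists i, U i x) ->
    exists l : list I, forall x, K x -> exists i, List.In i l /\ U i x.

Definition closed_ball {X : MSpace} (x : pt X) (r : R) : pt X -> Prop :=
  fun y => dist x y <= r.

Definition proper_space (X : MSpace) : Prop :=
  forall (x : pt X) (r : R), compact_set (closed_ball x r).

Definition is_object (X : MSpace) : Prop := is_metric X /\ proper_space X.

Definition continuous_map {X Y : MSpace} (f : pt X -> pt Y) : Prop :=
  forall x e, 0 < e -> exists d, 0 < d /\
    forall y, dist x y < d -> dist (f x) (f y) < e.

Definition proper_map {X Y : MSpace} (f : pt X -> pt Y) : Prop :=
  forall K : pt Y -> Prop, compact_set K -> compact_set (fun x => K (f x)).

Definition asymp_lipschitz {X Y : MSpace} (f : pt X -> pt Y) : Prop :=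
  exists lam s, 0 <= lam /\ 0 <= s /\
    forall x x', dist (f x) (f x') <= lam * dist x x' + s.

Definition morA {X Y : MSpace} (f : pt X -> pt Y) : Prop :=
  continuous_map f /\ proper_map f /\ asymp_lipschitz f.

(* Nonzero norm (stated for all base points, as the property is
   independent of base points) *)
Definition nonzero_norm {X Y : MSpace} (f : pt X -> pt Y) : Prop :=
  forall (x0 : pt X) (y0 : pt Y), exists c b, 0 < c /\ 0 <= b /\
    forall x, dist (f x) y0 >= c * dist x x0 - b.

Definition morAt {X Y : MSpace} (f : pt X -> pt Y) : Prop :=
  morA f /\ nonzero_norm f.

Definition subspace (X : MSpace) (A : pt X -> Prop) : MSpace :=
  {| pt := {x : pt X | A x};
     dist := fun a b => dist (proj1_sig a) (proj1_sig b) |}.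

Definition abs_extensor
  (mor : forall X Y : MSpace, (pt X -> pt Y) -> Prop) (Y : MSpace) : Prop :=
  forall X : MSpace, is_object X ->
  forall A : pt X -> Prop, closed_set A ->
  forall phi : pt (subspace X A) -> pt Y, mor (subspace X A) Y phi ->
  exists psi : pt X -> pt Y, mor X Y psi /\
    forall a : pt (subspace X A), psi (proj1_sig a) = phi a.

Definition AE_A (Y : MSpace) : Prop := abs_extensor (@morA) Y.
Definition AE_At (Y : MSpace) : Prop := abs_extensor (@morAt) Y.

(* Half space R^n_+ = { x in R^n | x_n >= 0 } with the Euclidean metric;
   coordinates indexed by 'I_n, x_n is the coordinate of index n.-1. *)
Definition halfspace_pt (n : nat) : Type :=
  {x : 'I_n -> R | forall i : 'I_n, nat_of_ord i = n.-1 -> 0 <= x i}.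

Definition euclid_dist (n : nat) (x y : halfspace_pt n) : R :=
  sqrt (\big[Rplus/0]_(i < n) Rsqr (proj1_sig x i - proj1_sig y i)).

Definition halfspace (n : nat) : MSpace :=
  {| pt := halfspace_pt n; dist := euclid_dist n |}.

(* Let phi : A -> R^n_+ be a morphism on a closed subset A of a proper metric space X.
   Each coordinate f of phi is continuous with |f a - f b| <= lam d(a,b) + s. Its McShane
   extension L x = inf_a (f a + lam d(x,a)) is lam-Lipschitz and within s of f on A, so
   h = f - L + 1 is continuous with values in [1, 1 + s]; such a bounded function extends
   continuously, within the same bounds, by the Dugundji-type formula
   inf_a h(a) d(x,a) / d(x,A), and L + ext(h) - 1 extends f.
   Adding d(x,A) to the positive part of the last coordinate keeps the image in the half
   space and makes |psi x| >= d(x,A). As some a in A with d(x,a) < d(x,A) + 1 satisfies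
   |phi a| <= |psi x| + O(d(x,A) + 1), bounded sets pull back to bounded sets, which gives
   properness (closed balls of R^n_+ are compact by bisection), and a linear lower bound on
   |phi| passes to psi. *)

From Stdlib Require Import Reals Lra List.
From Stdlib Require Import ClassicalEpsilon Classical FunctionalExtensionality ProofIrrelevance.
From HB Require Import structures.
From mathcomp Require Import ssreflect ssrfun ssrbool eqtype ssrnat seq fintype bigop.

Open Scope R_scope.

(** * Infima *)

(* Only specified for nonempty families that are bounded below. *)
Definition Inf {T : Type} (g : T -> R) : R :=
  - epsilon (inhabits 0) (fun l => is_lub (fun r => exists t, r = - g t) l).

Section Infimum.
Context {T : Type} (g : T -> R) (t0 : T) (m : R).
Hypothesis g_ge : forall t, m <= g t.

Lemma Inf_spec :
  (forall t, Inf g <= g t) /\ (forall m', (forall t, m' <= g t) -> m' <= Inf g).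
Proof.
  set E := fun r => exists t, r = - g t.
  have HE : bound E by exists (- m) => r [t ->]; have := g_ge t; lra.
  have [l Hl] := completeness E HE (ex_intro _ (- g t0) (ex_intro _ t0 erefl)).
  have := epsilon_spec (inhabits 0) _ (ex_intro _ l Hl); rewrite /Inf -/E.
  set l' := epsilon _ _ => -[Hub Hlub]; split.
  - by move=> t; have := Hub (- g t) (ex_intro _ t erefl); lra.
  - move=> m' Hm'; suff : l' <= - m' by lra.
    by apply: Hlub => r [t ->]; have := Hm' t; lra.
Qed.

Lemma Inf_lb t : Inf g <= g t.
Proof. by case: Inf_spec. Qed.

Lemma Inf_glb m' : (forall t, m' <= g t) -> m' <= Inf g.
Proof. by case: Inf_spec => _; apply. Qed.

Lemma Inf_approx e : 0 < e -> exists t, g t < Inf g + e.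
Proof.
  move=> He; apply: NNPP => Hn.
  suff : Inf g + e <= Inf g by lra.
  by apply: Inf_glb => t; apply: Rnot_lt_le => Ht; apply: Hn; exists t.
Qed.

End Infimum.

Lemma Rle_epsilon (a b c : R) : 0 < c -> (forall e, 0 < e -> a <= b + e * c) -> a <= b.
Proof.
  move=> Hc H; apply: Rnot_lt_le => Hlt.
  have He : 0 < (a - b) / (2 * c) by apply: Rdiv_lt_0_compat; lra.
  have := H _ He; have -> : (a - b) / (2 * c) * c = (a - b) / 2 by field; lra.
  lra.
Qed.

Lemma Inf_mul_le {T : Type} (g1 g2 : T -> R) (t0 : T) m1 m2 c1 c2 :
  (forall t, m1 <= g1 t) -> (forall t, m2 <= g2 t) -> 0 <= c1 -> 0 < c2 ->
  (forall t, g1 t * c1 <= g2 t * c2) -> Inf g1 * c1 <= Inf g2 * c2.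
Proof.
  move=> Hm1 Hm2 Hc1 Hc2 H; apply: (Rle_epsilon _ _ c2 Hc2) => e He.
  have [t Ht] := Inf_approx g2 t0 m2 Hm2 e He.
  have : Inf g1 * c1 <= g1 t * c1 by apply: Rmult_le_compat_r => //; apply: Inf_lb.
  have : g2 t * c2 <= (Inf g2 + e) * c2 by apply: Rmult_le_compat_r; lra.
  have := H t; lra.
Qed.

Lemma Rabs_le_between (a b : R) : Rabs a <= b -> - b <= a <= b.
Proof. by rewrite /Rabs; case: Rcase_abs; lra. Qed.

Lemma div_ge0 (d c : R) : 0 < c -> 0 <= d -> 0 <= d / c.
Proof. by move=> Hc Hd; apply: Rmult_le_pos => //; apply/Rlt_le/Rinv_0_lt_compat. Qed.

Lemma divK (d c : R) : 0 < c -> d / c * c = d.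
Proof. by move=> Hc; field; lra. Qed.

(** * Metric spaces and real-valued functions *)

Section Metric.
Context {X : MSpace} (HX : is_metric X).

Lemma dist_eq0 (x y : pt X) : dist x y = 0 -> x = y.
Proof. by case: HX => H _; apply H. Qed.

Lemma dist_refl (x : pt X) : dist x x = 0.
Proof. by case: HX => H _; apply H. Qed.

Lemma dist_sym (x y : pt X) : dist x y = dist y x.
Proof. by case: HX => _ []. Qed.

Lemma dist_tri (x y z : pt X) : dist x z <= dist x y + dist y z.
Proof. by case: HX => _ [_]. Qed.

Lemma dist_ge0 (x y : pt X) : 0 <= dist x y.
Proof. have := dist_tri x y x; rewrite dist_refl (dist_sym y x); lra. Qed.

Lemma open_ball_open (c : pt X) (r : R) : open_set (fun y => dist c y < r).
Proof.
  move=> y Hy; exists (r - dist c y); split; first lra.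
  by move=> z Hz; have := dist_tri c y z; lra.
Qed.

Lemma closed_ball_closed (c : pt X) (r : R) : closed_set (closed_ball c r).
Proof.
  move=> y; rewrite /closed_ball => Hy; exists (dist c y - r); split; first lra.
  by move=> z Hz Hcz; have := dist_tri c z y; rewrite (dist_sym z y); lra.
Qed.

Lemma subspace_metric (A : pt X -> Prop) : is_metric (subspace X A).
Proof.
  split; [|split].
  - move=> [x Hx] [y Hy] /=; split=> [/dist_eq0 Exy|[->]]; last exact: dist_refl.
    by subst y; rewrite (proof_irrelevance _ Hx Hy).
  - by move=> [x ?] [y ?] /=; apply: dist_sym.
  - by move=> [x ?] [y ?] [z ?] /=; apply: dist_tri.
Qed.

End Metric.

Definition rcontinuous {X : MSpace} (g : pt X -> R) : Prop :=
  forall x e, 0 < e -> exists d, 0 < d /\ forall y, dist x y < d -> Rabs (g x - g y) < e.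

Section RealContinuity.
Context {X : MSpace}.

Lemma lipschitz_rcontinuous (g : pt X -> R) (k : R) :
  0 <= k -> (forall x y, Rabs (g x - g y) <= k * dist x y) -> rcontinuous g.
Proof.
  move=> Hk Hg x e He; exists (e / (k + 1)); split; first by apply: Rdiv_lt_0_compat; lra.
  move=> y Hy; have := Hg x y; have := divK e (k + 1) ltac:(lra).
  move: (e / (k + 1)) Hy => d Hy Hd Hxy.
  suff : k * dist x y < e by lra.
  case: (Rle_or_lt 0 (dist x y)) => H0; nra.
Qed.

Lemma rcontinuous_const (c : R) : rcontinuous (fun _ : pt X => c).
Proof.
  by apply: (lipschitz_rcontinuous _ 0 (Rle_refl 0)) => x y; rewrite Rminus_diag Rabs_R0; lra.
Qed.

Lemma rcontinuous_add (g1 g2 : pt X -> R) :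
  rcontinuous g1 -> rcontinuous g2 -> rcontinuous (fun x => g1 x + g2 x).
Proof.
  move=> H1 H2 x e He.
  have [d1 [Hd1 Hg1]] := H1 x (e / 2) ltac:(lra).
  have [d2 [Hd2 Hg2]] := H2 x (e / 2) ltac:(lra).
  exists (Rmin d1 d2); split=> [|y Hy]; first exact: Rmin_pos.
  have := Hg1 y (Rlt_le_trans _ _ _ Hy (Rmin_l _ _)).
  have := Hg2 y (Rlt_le_trans _ _ _ Hy (Rmin_r _ _)).
  have := Rabs_triang (g1 x - g1 y) (g2 x - g2 y).
  have -> : g1 x - g1 y + (g2 x - g2 y) = g1 x + g2 x - (g1 y + g2 y) by ring.
  lra.
Qed.

Lemma Rmax0_lip (a b : R) : Rabs (Rmax a 0 - Rmax b 0) <= Rabs (a - b).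
Proof.
  rewrite /Rmax; case: Rle_dec; case: Rle_dec; rewrite /Rabs;
  repeat case: Rcase_abs; lra.
Qed.

Lemma rcontinuous_max0 (g : pt X -> R) : rcontinuous g -> rcontinuous (fun x => Rmax (g x) 0).
Proof.
  move=> Hg x e He; have [d [Hd H]] := Hg x e He; exists d; split=> // y Hy.
  exact: Rle_lt_trans (Rmax0_lip _ _) (H y Hy).
Qed.

End RealContinuity.

(** * Extension of continuous asymptotically Lipschitz real functions *)

Section DistanceToSet.
Context {X : MSpace} (HX : is_metric X) (A : pt X -> Prop).

Definition set_dist (x : pt X) : R := Inf (fun a : {y | A y} => dist x (proj1_sig a)).

Lemma set_dist_le x (a : {y | A y}) : set_dist x <= dist x (proj1_sig a).
Proof. by apply: (Inf_lb _ a 0) => b; apply: dist_ge0. Qed.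

Lemma set_dist_in (a : {y | A y}) : set_dist (proj1_sig a) = 0.
Proof.
  apply: Rle_antisym; first by have := set_dist_le (proj1_sig a) a; rewrite (dist_refl HX).
  by apply: (Inf_glb _ a 0) => b; apply: dist_ge0.
Qed.

Variable a0 : {y | A y}.

Lemma set_dist_ge0 x : 0 <= set_dist x.
Proof. by apply: (Inf_glb _ a0 0) => b; apply: dist_ge0. Qed.

Lemma set_dist_approx x e : 0 < e -> exists a : {y | A y}, dist x (proj1_sig a) < set_dist x + e.
Proof. by apply: (Inf_approx _ a0 0) => b; apply: dist_ge0. Qed.

Lemma set_dist_lip x y : set_dist x <= set_dist y + dist x y.
Proof.
  suff : set_dist x - dist x y <= set_dist y by lra.
  apply: (Inf_glb _ a0 0) => [b|a]; first exact: dist_ge0.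
  by have := set_dist_le x a; have := dist_tri HX x y (proj1_sig a); lra.
Qed.

Lemma set_dist_abs x y : Rabs (set_dist x - set_dist y) <= dist x y.
Proof.
  have := set_dist_lip x y; have := set_dist_lip y x; rewrite (dist_sym HX y x).
  by move=> *; apply: Rabs_le; lra.
Qed.

Lemma set_dist_gt0 x : closed_set A -> ~ A x -> 0 < set_dist x.
Proof.
  move=> HA Hx; have [e [He Hball]] := HA x Hx.
  suff : e <= set_dist x by lra.
  apply: (Inf_glb _ a0 0) => [b|[a Ha] /=]; first exact: dist_ge0.
  by apply: Rnot_lt_le => Hl; exact: Hball a Hl Ha.
Qed.

End DistanceToSet.

Section McShane.
Context {X : MSpace} (HX : is_metric X) (A : pt X -> Prop) (a0 : {y | A y}).
Context (f : {y | A y} -> R) (lam s : R).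
Hypothesis lam_ge0 : 0 <= lam.
Hypothesis f_asymp :
  forall a b, Rabs (f a - f b) <= lam * dist (proj1_sig a) (proj1_sig b) + s.

Definition mcshane (x : pt X) : R := Inf (fun a : {y | A y} => f a + lam * dist x (proj1_sig a)).

Lemma mcshane_family_lb x a :
  f a0 - s - lam * dist x (proj1_sig a0) <= f a + lam * dist x (proj1_sig a).
Proof.
  have [_ H1] := Rabs_le_between _ _ (f_asymp a0 a).
  have := dist_tri HX (proj1_sig a0) x (proj1_sig a); rewrite (dist_sym HX _ x) => Ht.
  have : lam * dist (proj1_sig a0) (proj1_sig a)
           <= lam * (dist x (proj1_sig a0) + dist x (proj1_sig a)).
    exact: Rmult_le_compat_l.
  lra.
Qed.

Lemma mcshane_le x a : mcshane x <= f a + lam * dist x (proj1_sig a).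
Proof. exact: (Inf_lb _ a0 _ (mcshane_family_lb x)). Qed.

Lemma mcshane_glb x m : (forall a, m <= f a + lam * dist x (proj1_sig a)) -> m <= mcshane x.
Proof. exact: (Inf_glb _ a0 _ (mcshane_family_lb x)). Qed.

Lemma mcshane_lip x y : Rabs (mcshane x - mcshane y) <= lam * dist x y.
Proof.
  suff Hle : forall x y, mcshane x <= mcshane y + lam * dist x y.
    by have := Hle x y; have := Hle y x; rewrite (dist_sym HX y x) => *; apply: Rabs_le; lra.
  move=> {}x {}y; suff : mcshane x - lam * dist x y <= mcshane y by lra.
  apply: mcshane_glb => a; have := mcshane_le x a.
  have : lam * dist x (proj1_sig a) <= lam * (dist x y + dist y (proj1_sig a)).
    exact/Rmult_le_compat_l/dist_tri.
  lra.
Qed.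

Lemma mcshane_on a : f a - s <= mcshane (proj1_sig a) <= f a.
Proof.
  split.
  - apply: mcshane_glb => b; have [_ H1] := Rabs_le_between _ _ (f_asymp a b); lra.
  - by have := mcshane_le (proj1_sig a) a; rewrite (dist_refl HX) Rmult_0_r; lra.
Qed.

End McShane.

Section Dugundji.
Context {X : MSpace} (HX : is_metric X) (A : pt X -> Prop) (HA : closed_set A).
Context (a0 : {y | A y}) (h : {y | A y} -> R) (M : R).
Hypothesis h_bounds : forall a, 1 <= h a <= M.
Hypothesis h_cont : rcontinuous (X := subspace X A) h.

Let ratio x (a : {y | A y}) : R := h a * (dist x (proj1_sig a) / set_dist A x).

Definition dugundji (x : pt X) : R :=
  match excluded_middle_informative (A x) with
  | left Hx => h (exist _ x Hx)
  | right _ => Inf (ratio x)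
  end.

Lemma dugundji_on a : dugundji (proj1_sig a) = h a.
Proof.
  case: a => x Hx; rewrite /dugundji /=; case: excluded_middle_informative => // Hx'.
  by rewrite (proof_irrelevance _ Hx' Hx).
Qed.

Lemma dugundji_off x : ~ A x -> dugundji x = Inf (ratio x).
Proof. by rewrite /dugundji; case: excluded_middle_informative. Qed.

Lemma ratio_ge x a : ~ A x -> h a <= ratio x a.
Proof.
  move=> Hx; have HD := set_dist_gt0 HX A a0 x HA Hx.
  have Hq : 1 <= dist x (proj1_sig a) / set_dist A x.
    apply: (Rmult_le_reg_r (set_dist A x)) => //.
    by rewrite divK // Rmult_1_l; apply: set_dist_le.
  by have := h_bounds a; rewrite /ratio; nra.
Qed.

Lemma ratio_ge1 x : ~ A x -> forall a, 1 <= ratio x a.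
Proof. by move=> Hx a; have := ratio_ge x a Hx; have := h_bounds a; lra. Qed.

Lemma dugundji_bounds x : 1 <= dugundji x <= M.
Proof.
  case: (classic (A x)) => Hx; first by rewrite -[x]/(proj1_sig (exist A x Hx)) dugundji_on.
  rewrite dugundji_off //; split.
    by apply: (Inf_glb _ a0 _ (ratio_ge1 x Hx)); apply: ratio_ge1.
  have HD := set_dist_gt0 HX A a0 x HA Hx.
  have HM := h_bounds a0.
  apply: (Rle_epsilon _ _ M) => [|e He]; first lra.
  have [a Ha] := set_dist_approx HX A a0 x (e * set_dist A x) ltac:(nra).
  apply: Rle_trans (Inf_lb _ a0 _ (ratio_ge1 x Hx) a) _.
  have Hq := divK (dist x (proj1_sig a)) _ HD.
  have Hq0 : 0 <= dist x (proj1_sig a) / set_dist A x by apply/div_ge0/dist_ge0.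
  rewrite /ratio; move: (dist x (proj1_sig a) / set_dist A x) Hq Hq0 => q Hq Hq0.
  have Hq1 : q <= 1 + e by nra.
  by have := h_bounds a; nra.
Qed.

Lemma ratio_shift x y a : ~ A x -> ~ A y ->
  ratio y a * (set_dist A x - dist x y) <= ratio x a * (set_dist A x + dist x y).
Proof.
  move=> Hx Hy; have Dx := set_dist_gt0 HX A a0 x HA Hx.
  have Dy := set_dist_gt0 HX A a0 y HA Hy.
  have Hxy := set_dist_lip HX A a0 x y.
  have Hr := dist_ge0 HX x y.
  have Hu := divK (dist y (proj1_sig a)) _ Dy.
  have Hv := divK (dist x (proj1_sig a)) _ Dx.
  have Hu0 : 0 <= dist y (proj1_sig a) / set_dist A y by apply/div_ge0/dist_ge0.
  have Hv1 : 1 <= dist x (proj1_sig a) / set_dist A x.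
    apply: (Rmult_le_reg_r (set_dist A x)) => //.
    by rewrite divK // Rmult_1_l; apply: set_dist_le.
  have Hyx : dist y (proj1_sig a) <= dist x y + dist x (proj1_sig a).
    by rewrite (dist_sym HX x y); apply: dist_tri.
  rewrite /ratio; move: (dist y _ / _) (dist x _ / _) Hu Hv Hu0 Hv1 => u v Hu Hv Hu0 Hv1.
  rewrite !Rmult_assoc; apply: Rmult_le_compat_l; first by have := h_bounds a; lra.
  have : u * (set_dist A x - dist x y) <= u * set_dist A y by apply: Rmult_le_compat_l; lra.
  have : dist x y <= v * dist x y by nra.
  lra.
Qed.

Lemma dugundji_shift x y : ~ A x -> ~ A y -> dist x y <= set_dist A x ->
  dugundji y * (set_dist A x - dist x y) <= dugundji x * (set_dist A x + dist x y).
Proof.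
  move=> Hx Hy Hr; rewrite !dugundji_off //.
  apply: (Inf_mul_le _ _ a0 1 1 _ _ (ratio_ge1 y Hy) (ratio_ge1 x Hx)); first lra.
  - by have := set_dist_gt0 HX A a0 x HA Hx; have := dist_ge0 HX x y; lra.
  - by move=> a; apply: ratio_shift.
Qed.

Lemma dugundji_cont_off x : ~ A x -> forall e, 0 < e -> exists d, 0 < d /\
  forall y, dist x y < d -> Rabs (dugundji x - dugundji y) < e.
Proof.
  move=> Hx e He; have HD := set_dist_gt0 HX A a0 x HA Hx.
  have HM := h_bounds a0.
  set D := set_dist A x in HD *.
  exists (Rmin (D / 4) (e * D / (8 * M))); split.
    by apply: Rmin_pos; [lra | apply: Rdiv_lt_0_compat; nra].
  move=> y Hy; have Hr0 := dist_ge0 HX x y.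
  have Hr1 : dist x y < D / 4 by have := Rmin_l (D / 4) (e * D / (8 * M)); lra.
  have Hr2 : dist x y * (8 * M) < e * D.
    have := Rmin_r (D / 4) (e * D / (8 * M)); have := divK (e * D) (8 * M) ltac:(lra); nra.
  have HDy1 : D <= set_dist A y + dist x y by apply: set_dist_lip.
  have HDy2 : set_dist A y <= D + dist x y.
    by rewrite /D (dist_sym HX x y); apply: set_dist_lip.
  have Hy' : ~ A y.
    by move=> HAy; have := set_dist_in HX A (exist _ y HAy) => /= E; lra.
  have S1 := dugundji_shift x y Hx Hy' ltac:(rewrite -/D; lra).
  have S2 := dugundji_shift y x Hy' Hx ltac:(rewrite (dist_sym HX y x); lra).
  rewrite (dist_sym HX y x) -/D in S1 S2.
  have B1 := dugundji_bounds x; have B2 := dugundji_bounds y.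
  move: (dugundji x) (dugundji y) (set_dist A y) (dist x y) S1 S2 B1 B2 HDy1 HDy2 Hr0 Hr1 Hr2
    => gx gy Dy r S1 S2 B1 B2 HDy1 HDy2 Hr0 Hr1 Hr2.
  apply: Rabs_def1.
  - have : (gx - gy) * (Dy - r) <= 2 * r * M by nra.
    nra.
  - have : (gy - gx) * (D - r) <= 2 * r * M by nra.
    nra.
Qed.

Section NearA.
Variables (a : {y | A y}) (e eta : R).
Hypothesis e_ge0 : 0 <= e.
Hypothesis h_near : forall b, dist (proj1_sig a) (proj1_sig b) < eta -> Rabs (h a - h b) < e.

Lemma dugundji_near_lb y : ~ A y -> dist (proj1_sig a) y * (M + 1) <= eta -> h a - e <= dugundji y.
Proof.
  move=> Hy Hr; rewrite dugundji_off //.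
  apply: (Inf_glb _ a0 _ (ratio_ge1 y Hy)) => b.
  case: (Rlt_or_le (dist (proj1_sig a) (proj1_sig b)) eta) => Hb.
    by have := ratio_ge y b Hy; have [? _] := Rabs_def2 _ _ (h_near b Hb); lra.
  have HDy := set_dist_gt0 HX A a0 y HA Hy.
  have HDy1 := set_dist_le HX A y a; rewrite (dist_sym HX y) in HDy1.
  have T := dist_tri HX (proj1_sig a) y (proj1_sig b).
  have Hu := divK (dist y (proj1_sig b)) _ HDy.
  have Hhb := h_bounds b; have Hha := h_bounds a.
  rewrite /ratio; move: (dist y (proj1_sig b) / set_dist A y) Hu => u Hu.
  have HMr : M * set_dist A y <= M * dist (proj1_sig a) y by apply: Rmult_le_compat_l; lra.
  have Hu1 : M <= u by apply: (Rmult_le_reg_r (set_dist A y)) => //; lra.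
  have : u <= h b * u by nra.
  lra.
Qed.

Lemma dugundji_near_ub y th : ~ A y -> 0 < th <= 1 -> 3 * dist (proj1_sig a) y <= eta ->
  dugundji y <= (h a + e) * (1 + th).
Proof.
  move=> Hy Hth Hr; rewrite dugundji_off //.
  have HDy := set_dist_gt0 HX A a0 y HA Hy.
  have HDy1 := set_dist_le HX A y a; rewrite (dist_sym HX y) in HDy1.
  have [b Hb] := set_dist_approx HX A a0 y (th * set_dist A y) ltac:(nra).
  apply: Rle_trans (Inf_lb _ a0 _ (ratio_ge1 y Hy) b) _.
  have Hab : dist (proj1_sig a) (proj1_sig b) < eta.
    by have := dist_tri HX (proj1_sig a) y (proj1_sig b); nra.
  have [_ Hhb'] := Rabs_def2 _ _ (h_near b Hab).
  have Hu := divK (dist y (proj1_sig b)) _ HDy.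
  have Hu0 : 0 <= dist y (proj1_sig b) / set_dist A y by apply/div_ge0/dist_ge0.
  have Hhb := h_bounds b.
  rewrite /ratio; move: (dist y (proj1_sig b) / set_dist A y) Hu Hu0 => u Hu Hu0.
  have Hu1 : u <= 1 + th by nra.
  have : h b * u <= h b * (1 + th) by apply: Rmult_le_compat_l; lra.
  have : h b * (1 + th) <= (h a + e) * (1 + th) by apply: Rmult_le_compat_r; lra.
  lra.
Qed.

End NearA.

Lemma dugundji_cont_on (a : {y | A y}) e : 0 < e -> exists d, 0 < d /\
  forall y, dist (proj1_sig a) y < d -> Rabs (dugundji (proj1_sig a) - dugundji y) < e.
Proof.
  move=> He; have [eta [Heta Hh]] := h_cont a (e / 2) ltac:(lra).
  have HM := h_bounds a; rewrite dugundji_on.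
  pose th := e / (2 * (M + e)).
  have Hth : 0 < th by apply: Rdiv_lt_0_compat; lra.
  have Hth1 : th * (2 * (M + e)) = e by apply: divK; lra.
  exists (eta / (3 * (M + 1))); split; first by apply: Rdiv_lt_0_compat; lra.
  move=> y Hy; have Hr := divK eta (3 * (M + 1)) ltac:(lra).
  have Hr0 := dist_ge0 HX (proj1_sig a) y.
  have Hr3 : dist (proj1_sig a) y * (3 * (M + 1)) <= eta by nra.
  case: (classic (A y)) => HAy.
  - rewrite -[y]/(proj1_sig (exist A y HAy)) dugundji_on.
    by have := Hh (exist A y HAy) ltac:(simpl; nra); lra.
  - have Lb := dugundji_near_lb a (e / 2) eta ltac:(lra) Hh y HAy ltac:(nra).
    have Ub := dugundji_near_ub a (e / 2) eta Hh y th HAy ltac:(split; nra) ltac:(nra).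
    apply: Rabs_def1; nra.
Qed.

Lemma dugundji_cont : rcontinuous dugundji.
Proof.
  move=> x; case: (classic (A x)) => Hx; last exact: dugundji_cont_off.
  exact: (dugundji_cont_on (exist A x Hx)).
Qed.

End Dugundji.

Lemma real_extension {X : MSpace} (HX : is_metric X) (A : pt X -> Prop) (HA : closed_set A)
  (a0 : {y | A y}) (f : {y | A y} -> R) (lam s : R) :
  0 <= lam -> 0 <= s -> rcontinuous (X := subspace X A) f ->
  (forall a b, Rabs (f a - f b) <= lam * dist (proj1_sig a) (proj1_sig b) + s) ->
  exists F : pt X -> R, rcontinuous F /\ (forall x y, Rabs (F x - F y) <= lam * dist x y + s) /\
    forall a, F (proj1_sig a) = f a.
Proof.
  move=> Hlam Hs f_cont f_asymp.
  pose L := mcshane A f lam.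
  have L_lip x y : Rabs (L x - L y) <= lam * dist x y.
    exact: mcshane_lip HX A a0 f lam s Hlam f_asymp x y.
  pose h a := f a - L (proj1_sig a) + 1.
  have h_bounds a : 1 <= h a <= 1 + s.
    by have := mcshane_on HX A a0 f lam s Hlam f_asymp a; rewrite /h /L; lra.
  have h_cont : rcontinuous (X := subspace X A) h.
    apply: (@rcontinuous_add (subspace X A) (fun a => f a - L (proj1_sig a)) (fun _ => 1));
      last exact: rcontinuous_const.
    apply: (@rcontinuous_add (subspace X A) f (fun a => - L (proj1_sig a))) => //.
    apply: (lipschitz_rcontinuous _ lam Hlam) => a b.
    have -> : - L (proj1_sig a) - - L (proj1_sig b) = L (proj1_sig b) - L (proj1_sig a) by lra.
    by rewrite Rabs_minus_sym; apply: L_lip.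
  have G_bounds := dugundji_bounds HX A HA a0 h (1 + s) h_bounds.
  exists (fun x => dugundji A h x + L x - 1); split; [|split].
  - apply: (rcontinuous_add (fun x => dugundji A h x + L x) (fun _ => - (1)));
      last exact: rcontinuous_const.
    apply: rcontinuous_add; first exact: dugundji_cont.
    exact: lipschitz_rcontinuous Hlam L_lip.
  - move=> x y; have := L_lip x y; have := G_bounds x; have := G_bounds y.
    by move=> Gy Gx /Rabs_le_between HL; apply: Rabs_le; lra.
  - by move=> a; rewrite dugundji_on /h; ring.
Qed.

(** * The Euclidean half space *)

HB.instance Definition _ := Monoid.isComLaw.Build R 0 Rplus
  (fun x y z => esym (Rplus_assoc x y z)) Rplus_comm Rplus_0_l.

Section RealSums.
Context {I : Type}.
Implicit Types (r : seq I) (F G : I -> R).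

Lemma sumR_ge0 r F : (forall i, 0 <= F i) -> 0 <= \big[Rplus/0]_(i <- r) F i.
Proof. by move=> H; apply: big_ind => [|x y|i _]; [exact: Rle_refl | lra | exact: H]. Qed.

Lemma sumR_le r F G : (forall i, F i <= G i) ->
  \big[Rplus/0]_(i <- r) F i <= \big[Rplus/0]_(i <- r) G i.
Proof. by move=> H; apply: big_ind2 => [|x1 x2 y1 y2|i _]; [exact: Rle_refl | lra | exact: H]. Qed.

Lemma sumR_scal r F c : \big[Rplus/0]_(i <- r) (c * F i) = c * \big[Rplus/0]_(i <- r) F i.
Proof. by rewrite (big_morph (Rmult c) (Rmult_plus_distr_l c) (Rmult_0_r c)). Qed.

Lemma cauchy_schwarz r (a b : I -> R) :
  (\big[Rplus/0]_(i <- r) (a i * b i)) * (\big[Rplus/0]_(i <- r) (a i * b i)) <=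
  (\big[Rplus/0]_(i <- r) (a i * a i)) * (\big[Rplus/0]_(i <- r) (b i * b i)).
Proof.
  elim: r => [|j r IH]; rewrite ?big_nil ?big_cons; first lra.
  have HA : 0 <= \big[Rplus/0]_(i <- r) (a i * a i) by apply: sumR_ge0 => i; nra.
  have HB : 0 <= \big[Rplus/0]_(i <- r) (b i * b i) by apply: sumR_ge0 => i; nra.
  set P := \big[Rplus/0]_(i <- r) (a i * b i) in IH *.
  set SA := \big[Rplus/0]_(i <- r) (a i * a i) in IH HA *.
  set SB := \big[Rplus/0]_(i <- r) (b i * b i) in IH HB *.
  have HY : (2 * a j * b j * P) * (2 * a j * b j * P) <=
            (a j * a j * SB + b j * b j * SA) * (a j * a j * SB + b j * b j * SA).
    have : 0 <= (a j * b j) * (a j * b j) * (SA * SB - P * P).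
      by apply: Rmult_le_pos; [exact: Rle_0_sqr | lra].
    have := Rle_0_sqr (a j * a j * SB - b j * b j * SA); rewrite /Rsqr; nra.
  have : 0 <= a j * a j * SB + b j * b j * SA by nra.
  nra.
Qed.

Lemma minkowski r (a b : I -> R) :
  sqrt (\big[Rplus/0]_(i <- r) ((a i + b i) * (a i + b i))) <=
  sqrt (\big[Rplus/0]_(i <- r) (a i * a i)) + sqrt (\big[Rplus/0]_(i <- r) (b i * b i)).
Proof.
  have -> : \big[Rplus/0]_(i <- r) ((a i + b i) * (a i + b i)) =
    \big[Rplus/0]_(i <- r) (a i * a i) + 2 * \big[Rplus/0]_(i <- r) (a i * b i) +
    \big[Rplus/0]_(i <- r) (b i * b i).
    by rewrite -sumR_scal -!big_split; apply: eq_bigr => i _ /=; ring.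
  have HA : 0 <= \big[Rplus/0]_(i <- r) (a i * a i) by apply: sumR_ge0 => i; nra.
  have HB : 0 <= \big[Rplus/0]_(i <- r) (b i * b i) by apply: sumR_ge0 => i; nra.
  have CS := cauchy_schwarz r a b.
  set SP := \big[Rplus/0]_(i <- r) (a i * b i) in CS *.
  set SA := \big[Rplus/0]_(i <- r) (a i * a i) in CS HA *.
  set SB := \big[Rplus/0]_(i <- r) (b i * b i) in CS HB *.
  have HsA := sqrt_sqrt SA HA; have HsB := sqrt_sqrt SB HB.
  have HsA0 := sqrt_pos SA; have HsB0 := sqrt_pos SB.
  have HP : SP <= sqrt SA * sqrt SB.
    apply: Rnot_lt_le => Hlt.
    have : sqrt SA * sqrt SB * (sqrt SA * sqrt SB) < SP * SP.
      by have := Rmult_le_pos _ _ HsA0 HsB0; nra.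
    nra.
  rewrite -(sqrt_square (sqrt SA + sqrt SB)); last lra.
  apply: sqrt_le_1_alt; nra.
Qed.

Lemma sum_sq_le_sq_sum_abs r (u : I -> R) :
  \big[Rplus/0]_(i <- r) (u i * u i) <=
    (\big[Rplus/0]_(i <- r) Rabs (u i)) * (\big[Rplus/0]_(i <- r) Rabs (u i)).
Proof.
  elim: r => [|j r IH]; rewrite ?big_nil ?big_cons; first lra.
  have HT : 0 <= \big[Rplus/0]_(i <- r) Rabs (u i) by apply: sumR_ge0 => i; apply: Rabs_pos.
  have Hj : u j * u j = Rabs (u j) * Rabs (u j).
    by rewrite -Rabs_mult Rabs_right //; apply/Rle_ge/Rle_0_sqr.
  by have := Rabs_pos (u j); nra.
Qed.

End RealSums.

Lemma sumR_mem {I : eqType} (r : seq I) (F : I -> R) j :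
  (forall i, 0 <= F i) -> j \in r -> F j <= \big[Rplus/0]_(i <- r) F i.
Proof. by move=> H Hj; rewrite (big_rem j) //=; have := sumR_ge0 (rem j r) F H; lra. Qed.

Lemma sumR_const_ord (n : nat) (c : R) : \big[Rplus/0]_(i < n) c = INR n * c.
Proof.
  rewrite big_const_ord; elim: n => [|n IH]; first by rewrite /= Rmult_0_l.
  by rewrite iterS IH S_INR; ring.
Qed.

Section Euclidean.
Context {n : nat}.
Implicit Types x y : pt (halfspace n).

Definition coord x (i : 'I_n) : R := proj1_sig x i.

Lemma halfspace_dist x y :
  dist x y = sqrt (\big[Rplus/0]_(i < n) ((coord x i - coord y i) * (coord x i - coord y i))).
Proof. by []. Qed.

Lemma coord_dist_le x y i : Rabs (coord x i - coord y i) <= dist x y.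
Proof.
  rewrite halfspace_dist -sqrt_Rsqr_abs; apply: sqrt_le_1_alt.
  apply: (sumR_mem _ (fun j => (coord x j - coord y j) * (coord x j - coord y j))) => [j|].
    exact: Rle_0_sqr.
  exact: mem_index_enum.
Qed.

Lemma dist_le_sum_abs x y : dist x y <= \big[Rplus/0]_(i < n) Rabs (coord x i - coord y i).
Proof.
  rewrite halfspace_dist -(sqrt_square (\big[Rplus/0]_(i < n) Rabs (coord x i - coord y i))).
    by apply: sqrt_le_1_alt; apply: (sum_sq_le_sq_sum_abs _ (fun i => coord x i - coord y i)).
  by apply: sumR_ge0 => i; apply: Rabs_pos.
Qed.

Lemma halfspace_ext x y : (forall i, coord x i = coord y i) -> x = y.
Proof.
  case: x y => [x Hx] [y Hy] /= H.
  have Exy : x = y by apply: functional_extensionality.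
  by subst y; rewrite (proof_irrelevance _ Hx Hy).
Qed.

Lemma halfspace_metric : is_metric (halfspace n).
Proof.
  split; [|split].
  - move=> x y; split=> [Hxy|->].
      apply: halfspace_ext => i; have := coord_dist_le x y i; rewrite Hxy => H.
      by have := Rabs_pos (coord x i - coord y i); move: H; rewrite /Rabs; case: Rcase_abs; lra.
    rewrite halfspace_dist big1 ?sqrt_0 // => i _; ring.
  - by move=> x y; rewrite !halfspace_dist; congr sqrt; apply: eq_bigr => i _; ring.
  - move=> x y z; rewrite !halfspace_dist.
    rewrite (eq_bigr (fun i => (coord x i - coord y i + (coord y i - coord z i)) *
                               (coord x i - coord y i + (coord y i - coord z i)))) => [|i _];
      last ring.
    exact: (minkowski _ (fun i => coord x i - coord y i) (fun i => coord y i - coord z i)).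
Qed.

Definition origin : pt (halfspace n) :=
  exist (fun v : 'I_n -> R => forall i : 'I_n, nat_of_ord i = n.-1 -> 0 <= v i)
    (fun _ => 0) (fun _ _ => Rle_refl 0).

Lemma coord_le_norm x i : Rabs (coord x i) <= dist origin x.
Proof.
  have := coord_dist_le origin x i.
  by rewrite /coord /= Rminus_0_l Rabs_Ropp.
Qed.

End Euclidean.

(** * Compactness *)

Lemma exists_nat_gt (a : R) : exists m : nat, a < INR m.
Proof. by have [|m Hm] := INR_archimed 1 a; [lra | exists m; lra]. Qed.

Lemma list_max_ge (l : list nat) m : List.In m l -> (m <= list_max l)%coq_nat.
Proof.
  move=> Hm; have := proj1 (list_max_le l (list_max l)) (Nat.le_refl _).
  by move/Forall_forall; apply.
Qed.

Section Compactness.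
Context {X : MSpace} (HX : is_metric X).

Lemma compact_bounded (K : pt X -> Prop) (x0 : pt X) :
  compact_set K -> exists M, forall x, K x -> dist x0 x <= M.
Proof.
  move=> HK; have [|x _|l Hl] := HK nat (fun m y => dist x0 y < INR m).
  - by move=> m; apply: open_ball_open.
  - exact: exists_nat_gt.
  - exists (INR (list_max l)) => x Kx; have [m [Hm Hx]] := Hl x Kx.
    by have := le_INR _ _ (list_max_ge l m Hm); lra.
Qed.

Lemma compact_closed (K : pt X -> Prop) : compact_set K -> closed_set K.
Proof.
  move=> HK y Hy.
  have [|z Kz|l Hl] := HK nat (fun m z => / (INR m + 1) < dist z y).
  - move=> m z Hz; exists (dist z y - / (INR m + 1)); split; first lra.
    by move=> w Hw; have := dist_tri HX z w y; lra.
  - have Hzy : 0 < dist z y.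
      case: (dist_ge0 HX z y) => // H; exfalso; apply: Hy.
      by rewrite -(dist_eq0 HX z y (esym H)).
    have [m Hm] := exists_nat_gt (/ dist z y); exists m.
    have H0 : 0 < / dist z y by apply: Rinv_0_lt_compat.
    have := pos_INR m => Hpm.
    rewrite -(Rinv_inv (dist z y)); apply: Rinv_lt_contravar; nra.
  - exists (/ (INR (list_max l) + 1)); split.
      by apply: Rinv_0_lt_compat; have := pos_INR (list_max l); lra.
    move=> w Hw Kw; have [m [Hm Hwm]] := Hl w Kw.
    have HmN := le_INR _ _ (list_max_ge l m Hm).
    have : / (INR (list_max l) + 1) <= / (INR m + 1).
      by apply: Rinv_le_contravar; [have := pos_INR m |]; lra.
    by rewrite (dist_sym HX y w) in Hw; lra.
Qed.

Lemma closed_sub_compact (K S : pt X -> Prop) :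
  compact_set K -> (forall x, S x -> K x) -> closed_set S -> compact_set S.
Proof.
  move=> HK HSK HS I U HU Hcov.
  have [|x Kx|l Hl] := HK (option I) (fun o x => if o is Some i then U i x else ~ S x).
  - by case=> [i|]; [exact: HU | exact: HS].
  - case: (classic (S x)) => Sx; last by exists None.
    by have [i Hi] := Hcov x Sx; exists (Some i).
  - exists (flat_map (fun o => if o is Some i then [:: i] else [::]) l) => x Sx.
    have [[i|] [Hin Hx]] := Hl x (HSK x Sx); last by [].
    by exists i; split=> //; apply/in_flat_map; exists (Some i); split=> //; left.
Qed.

Lemma preimage_closed {Y : MSpace} (f : pt Y -> pt X) (K : pt X -> Prop) :
  continuous_map f -> closed_set K -> closed_set (fun y => K (f y)).
Proof.
  move=> Hf HK y Hy; have [e [He Hb]] := HK (f y) Hy.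
  have [d [Hd Hd']] := Hf y e He; exists d; split=> // z Hz.
  exact: Hb (Hd' z Hz).
Qed.

End Compactness.

Lemma proper_of_coercive {X Y : MSpace} (HPX : proper_space X)
  (HY : is_metric Y) (f : pt X -> pt Y) (x0 : pt X) (y0 : pt Y) :
  continuous_map f ->
  (forall M, exists r, forall x, dist y0 (f x) <= M -> dist x0 x <= r) ->
  proper_map f.
Proof.
  move=> Hc Hco K HK; have [M HM] := compact_bounded HY K y0 HK.
  have [r Hr] := Hco M.
  apply: (closed_sub_compact (closed_ball x0 r)) => [|x Kx|]; first exact: HPX.
    exact/Hr/HM.
  exact: preimage_closed Hc (compact_closed HY K HK).
Qed.

Section HeineBorel.
Variables (n : nat) (I : Type) (U : I -> pt (halfspace n) -> Prop).

Definition box : Type := ('I_n -> R) * ('I_n -> R).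

Definition in_box (b : box) (p : pt (halfspace n)) : Prop :=
  forall i, b.1 i <= coord p i <= b.2 i.

Definition box_wf (b : box) : Prop := forall i, b.1 i <= b.2 i.

Definition uncovered (b : box) : Prop :=
  ~ exists l : list I, forall p, in_box b p -> exists i, List.In i l /\ U i p.

Definition set_coord (g : 'I_n -> R) (k : 'I_n) (v : R) : 'I_n -> R :=
  fun i => if i == k then v else g i.

Definition halve (b : box) (k : 'I_n) : box :=
  let m := (b.1 k + b.2 k) / 2 in
  if excluded_middle_informative (uncovered (b.1, set_coord b.2 k m))
  then (b.1, set_coord b.2 k m) else (set_coord b.1 k m, b.2).

Definition refine (b : box) : box := foldl halve b (enum 'I_n).

Definition nested (b0 : box) (j : nat) : box := iter j refine b0.

Lemma halve_spec b k : box_wf b -> uncovered b ->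
  let b' := halve b k in
  [/\ box_wf b', uncovered b', (forall i, b.1 i <= b'.1 i /\ b'.2 i <= b.2 i),
      b'.2 k - b'.1 k = (b.2 k - b.1 k) / 2 &
      forall i, i != k -> b'.2 i - b'.1 i = b.2 i - b.1 i].
Proof.
  move=> Hwf Hbad /=; rewrite /halve /set_coord; have Hk := Hwf k.
  case: excluded_middle_informative => Hl /=; split=> //; rewrite /box_wf /=.
  all: try by move=> i Hi; rewrite (negbTE Hi).
  all: try by rewrite eqxx; field.
  all: try by move=> i; case: (i =P k) => [->|_]; have := Hwf i; lra.
  move=> [l2 Hl2]; apply: Hl => -[l1 Hl1]; apply: Hbad; exists (l1 ++ l2) => p Hp.
  case: (Rle_lt_dec (coord p k) ((b.1 k + b.2 k) / 2)) => Hpk.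
  - have [|j [Hj Uj]] := Hl1 p.
      by move=> i /=; case: (i =P k) => [->|_]; have := Hp k; have := Hp i; lra.
    by exists j; split=> //; apply: in_or_app; left.
  - have [|j [Hj Uj]] := Hl2 p.
      by move=> i /=; case: (i =P k) => [->|_]; have := Hp k; have := Hp i; lra.
    by exists j; split=> //; apply: in_or_app; right.
Qed.

Lemma foldl_halve_spec r b : box_wf b -> uncovered b ->
  let b' := foldl halve b r in
  [/\ box_wf b', uncovered b', (forall i, b.1 i <= b'.1 i /\ b'.2 i <= b.2 i),
      (forall i, b'.2 i - b'.1 i <= b.2 i - b.1 i) &
      forall i, i \in r -> b'.2 i - b'.1 i <= (b.2 i - b.1 i) / 2].
Proof.
  elim: r b => [|k r IH] b Hwf Hbad /=.
    by split=> // i; lra.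
  have [H1 H2 H3 H4 H5] := halve_spec b k Hwf Hbad.
  have [G1 G2 G3 G4 G5] := IH _ H1 H2.
  split=> // i; first by have := H3 i; have := G3 i; lra.
  - have := G4 i; case: (eqVneq i k) => [->|Hik]; first by have := Hwf k; lra.
    by rewrite (H5 i Hik); lra.
  - rewrite in_cons; case: (eqVneq i k) => [->|Hik] /= Hi; first by have := G4 k; lra.
    by have := G5 i Hi; rewrite (H5 i Hik); lra.
Qed.

Lemma nested_spec b0 : box_wf b0 -> uncovered b0 -> forall j,
  let b := nested b0 j in
  [/\ box_wf b, uncovered b,
      (forall i, b.1 i <= (refine b).1 i /\ (refine b).2 i <= b.2 i) &
      forall i, b.2 i - b.1 i <= (b0.2 i - b0.1 i) / 2 ^ j].
Proof.
  move=> Hwf Hbad; elim=> [|j [H1 H2 H3 H4]] /=.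
    have [G1 G2 G3 _ _] := foldl_halve_spec (enum 'I_n) b0 Hwf Hbad.
    by split=> // i; rewrite /Rdiv Rinv_1 Rmult_1_r; lra.
  have [G1 G2 G3 _ G5] := foldl_halve_spec (enum 'I_n) _ H1 H2.
  have [K1 K2 K3 _ _] := foldl_halve_spec (enum 'I_n) _ G1 G2.
  split=> // i; have := G5 i (mem_enum _ i); have := H4 i.
  have Hp : 0 < 2 ^ j by apply: pow_lt; lra.
  have -> : (b0.2 i - b0.1 i) / (2 * 2 ^ j) = (b0.2 i - b0.1 i) / 2 ^ j / 2 by field; lra.
  rewrite /refine; lra.
Qed.

Lemma nested_mono b0 : box_wf b0 -> uncovered b0 -> forall j k, (j <= k)%N ->
  forall i, (nested b0 j).1 i <= (nested b0 k).1 i /\ (nested b0 k).2 i <= (nested b0 j).2 i.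
Proof.
  move=> Hwf Hbad j k /leP Hjk i; elim: Hjk => [|k' _ [IH1 IH2]]; first lra.
  have [_ _ H _] := nested_spec b0 Hwf Hbad k'.
  by change (nested b0 k'.+1) with (refine (nested b0 k')); have := H i; lra.
Qed.

Lemma nested_lo_le_hi b0 : box_wf b0 -> uncovered b0 -> forall j k i,
  (nested b0 j).1 i <= (nested b0 k).2 i.
Proof.
  move=> Hwf Hbad j k i.
  have [H1 _] := nested_mono b0 Hwf Hbad j (maxn j k) (leq_maxl j k) i.
  have [_ H2] := nested_mono b0 Hwf Hbad k (maxn j k) (leq_maxr j k) i.
  have [H3 _ _ _] := nested_spec b0 Hwf Hbad (maxn j k).
  by have := H3 i; lra.
Qed.

Lemma pow2_small (W e : R) : 0 <= W -> 0 < e -> exists j : nat, W / 2 ^ j < e.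
Proof.
  move=> HW He; have [j Hj] := exists_nat_gt (W / e); exists j.
  have Hp : 0 < 2 ^ j by apply: pow_lt; lra.
  have Hjp : INR j <= 2 ^ j.
    elim: j {Hj Hp} => [|j IH]; first by rewrite /=; lra.
    rewrite S_INR /=; have : 1 <= 2 ^ j by apply: pow_R1_Rle; lra.
    lra.
  apply: (Rmult_lt_reg_r (2 ^ j)) => //; rewrite divK //.
  have := divK W e He; have : W / e < 2 ^ j by lra.
  nra.
Qed.

Lemma nested_limit b0 : box_wf b0 -> uncovered b0 ->
  exists P : pt (halfspace n), forall j, in_box (nested b0 j) P.
Proof.
  move=> Hwf Hbad.
  have Hlb i j : - b0.2 i <= - (nested b0 j).1 i.
    by have := nested_lo_le_hi b0 Hwf Hbad j 0 i; rewrite [nested b0 0]/nested /=; lra.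
  pose pv i := - Inf (fun j => - (nested b0 j).1 i).
  have Hpl i j : (nested b0 j).1 i <= pv i.
    by have := Inf_lb _ 0%N _ (Hlb i) j; rewrite /pv; lra.
  have Hpu i k : pv i <= (nested b0 k).2 i.
    suff : - (nested b0 k).2 i <= Inf (fun j => - (nested b0 j).1 i) by rewrite /pv; lra.
    by apply: (Inf_glb _ 0%N _ (Hlb i)) => j; have := nested_lo_le_hi b0 Hwf Hbad j k i; lra.
  (* Every box meets the half space and the widths shrink to 0. *)
  have Hpv (i : 'I_n) : nat_of_ord i = n.-1 -> 0 <= pv i.
    move=> Hi; apply: Rnot_lt_le => Hneg.
    have Hw0 : 0 <= b0.2 i - b0.1 i by have := Hwf i; lra.
    have [j Hj] := pow2_small _ (- pv i) Hw0 ltac:(lra).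
    have [Hwfj Hbadj _ Hw] := nested_spec b0 Hwf Hbad j.
    have [q Hq] : exists q, in_box (nested b0 j) q.
      apply: NNPP => Hn; apply: Hbadj; exists nil => q Hq.
      by exfalso; apply: Hn; exists q.
    have := proj2_sig q i Hi; have := Hq i; have := Hw i; have := Hpl i j.
    rewrite /coord; lra.
  by exists (exist _ pv Hpv) => j i; rewrite /coord /=; split; [apply: Hpl | apply: Hpu].
Qed.

End HeineBorel.

Lemma box_compact (n : nat) (b0 : box n) : box_wf n b0 -> compact_set (in_box n b0).
Proof.
  move=> Hwf I U HU Hcov; apply: NNPP => Hbad.
  have [P HP] := nested_limit n I U b0 Hwf Hbad.
  have [i0 Hi0] := Hcov P (HP 0%N).
  have [e [He Hball]] := HU i0 P Hi0.
  have HW : 0 <= \big[Rplus/0]_(i < n) (b0.2 i - b0.1 i).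
    by apply: sumR_ge0 => i; have := Hwf i; lra.
  have [j Hj] := pow2_small _ e HW He.
  have [_ Hbadj _ Hw] := nested_spec n I U b0 Hwf Hbad j.
  apply: Hbadj; exists [:: i0] => q Hq; exists i0; split; first by left.
  apply: Hball; apply: Rle_lt_trans (dist_le_sum_abs P q) _.
  apply: (Rle_lt_trans _ (\big[Rplus/0]_(i < n) ((b0.2 i - b0.1 i) / 2 ^ j))).
    apply: sumR_le => i; have := Hq i; have := HP j i; have := Hw i.
    by move=> *; apply: Rabs_le; lra.
  rewrite (eq_bigr (fun i => / 2 ^ j * (b0.2 i - b0.1 i))) => [|i _]; last exact: Rmult_comm.
  by rewrite sumR_scal Rmult_comm.
Qed.

Lemma halfspace_proper (n : nat) : proper_space (halfspace n).
Proof.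
  move=> c r; case: (Rlt_or_le r 0) => Hr.
    move=> I U _ _; exists nil => x Hx; exfalso; rewrite /closed_ball in Hx.
    by have := dist_ge0 halfspace_metric c x; lra.
  apply: (closed_sub_compact (in_box n (fun i => coord c i - r, fun i => coord c i + r))).
  - by apply: box_compact => i /=; lra.
  - move=> x Hx i /=.
    by have := Rabs_le_between _ _ (Rle_trans _ _ _ (coord_dist_le c x i) Hx); lra.
  - exact: closed_ball_closed halfspace_metric c r.
Qed.

Lemma halfspace_object (n : nat) : is_object (halfspace n).
Proof. by split; [exact: halfspace_metric | exact: halfspace_proper]. Qed.

(** * Extension into the half space *)

Lemma last_index (n : nat) : (1 <= n)%N -> exists i : 'I_n, nat_of_ord i = n.-1.
Proof.
  move=> hn; have Hlt : (n.-1 < n)%N by rewrite ltn_predL.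
  by exists (Ordinal Hlt).
Qed.

Lemma nonzero_norm_of_base {X Y : MSpace} (HX : is_metric X) (HY : is_metric Y)
  (f : pt X -> pt Y) (x0 : pt X) (y0 : pt Y) (c b : R) :
  0 < c -> 0 <= b -> (forall x, dist (f x) y0 >= c * dist x x0 - b) -> nonzero_norm f.
Proof.
  move=> Hc Hb Hf x1 y1; exists c, (b + c * dist x0 x1 + dist y0 y1); split=> //; split.
    by have := dist_ge0 HX x0 x1; have := dist_ge0 HY y0 y1; nra.
  move=> x; have := Hf x; have := dist_tri HY (f x) y1 y0; have := dist_tri HX x x0 x1.
  rewrite (dist_sym HY y1 y0) => Hx Hy Hfx.
  have : c * dist x x1 <= c * (dist x x0 + dist x0 x1) by apply: Rmult_le_compat_l; lra.
  lra.
Qed.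

Section MapsIntoHalfspace.
Context {X : MSpace} {n : nat}.
Implicit Type psi : pt X -> pt (halfspace n).

Lemma sum_abs_small (r : seq 'I_n) (g : 'I_n -> pt X -> R) :
  (forall i, rcontinuous (g i)) -> forall x e, 0 < e -> exists d, 0 < d /\
    forall y, dist x y < d -> \big[Rplus/0]_(i <- r) Rabs (g i x - g i y) < e.
Proof.
  move=> Hg x; elim: r => [|k r IH] e He.
    by exists 1; split=> [|y _]; rewrite ?big_nil; lra.
  have [d1 [Hd1 H1]] := IH (e / 2) ltac:(lra).
  have [d2 [Hd2 H2]] := Hg k x (e / 2) ltac:(lra).
  exists (Rmin d1 d2); split=> [|y Hy]; first exact: Rmin_pos.
  rewrite big_cons; have := H1 y (Rlt_le_trans _ _ _ Hy (Rmin_l _ _)).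
  by have := H2 y (Rlt_le_trans _ _ _ Hy (Rmin_r _ _)); lra.
Qed.

Lemma map_continuous psi :
  (forall i, rcontinuous (fun x => coord (psi x) i)) -> continuous_map psi.
Proof.
  move=> Hg x e He; have [d [Hd H]] := sum_abs_small (index_enum 'I_n) _ Hg x e He.
  by exists d; split=> // y Hy; apply: Rle_lt_trans (dist_le_sum_abs _ _) (H y Hy).
Qed.

Lemma map_asymp psi (C D : R) :
  (forall i x y, Rabs (coord (psi x) i - coord (psi y) i) <= C * dist x y + D) ->
  forall x y, dist (psi x) (psi y) <= INR n * (C * dist x y + D).
Proof.
  move=> Hg x y; apply: Rle_trans (dist_le_sum_abs _ _) _.
  by rewrite -sumR_const_ord; apply: sumR_le => i; apply: Hg.
Qed.

End MapsIntoHalfspace.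

Section HalfspaceExtension.
Context {n : nat} (hn : (1 <= n)%N) {X : MSpace} (HX : is_metric X) (HPX : proper_space X).
Context (A : pt X -> Prop) (a0 : {y | A y}) (phi : {y | A y} -> pt (halfspace n)).
Hypothesis phi_proper : proper_map (X := subspace X A) phi.
Context (F : 'I_n -> pt X -> R) (lam s : R).
Hypotheses (lam_ge0 : 0 <= lam) (s_ge0 : 0 <= s).
Hypothesis F_cont : forall i, rcontinuous (F i).
Hypothesis F_asymp : forall i x y, Rabs (F i x - F i y) <= lam * dist x y + s.
Hypothesis F_ext : forall i a, F i (proj1_sig a) = coord (phi a) i.

(* The last coordinate is pushed up by the distance to A: this keeps the image in the
   half space and makes the extension coercive away from A. *)
Definition lift_coord (x : pt X) (i : 'I_n) : R :=
  if nat_of_ord i == n.-1 then Rmax (F i x) 0 + set_dist A x else F i x.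

Lemma lift_coord_ge0 x (i : 'I_n) : nat_of_ord i = n.-1 -> 0 <= lift_coord x i.
Proof.
  move=> Hi; rewrite /lift_coord Hi eqxx.
  by have := Rmax_r (F i x) 0; have := set_dist_ge0 HX A a0 x; lra.
Qed.

Definition lift (x : pt X) : pt (halfspace n) := exist _ (lift_coord x) (lift_coord_ge0 x).

Lemma lift_ext a : lift (proj1_sig a) = phi a.
Proof.
  apply: halfspace_ext => i; rewrite /coord /= /lift_coord F_ext.
  case: eqP => Hi //; rewrite (set_dist_in HX A a) Rmax_left ?Rplus_0_r //.
  exact: (proj2_sig (phi a) i Hi).
Qed.

Lemma lift_coord_asymp i x y :
  Rabs (lift_coord x i - lift_coord y i) <= (lam + 1) * dist x y + s.
Proof.
  have := F_asymp i x y; have := dist_ge0 HX x y; rewrite /lift_coord; case: (_ == _) => H0 H1.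
  - have := Rmax0_lip (F i x) (F i y); have := set_dist_abs HX A a0 x y.
    have := Rabs_triang (Rmax (F i x) 0 - Rmax (F i y) 0) (set_dist A x - set_dist A y).
    have -> : Rmax (F i x) 0 - Rmax (F i y) 0 + (set_dist A x - set_dist A y) =
              Rmax (F i x) 0 + set_dist A x - (Rmax (F i y) 0 + set_dist A y) by ring.
    lra.
  - lra.
Qed.

Lemma lift_cont : continuous_map lift.
Proof.
  apply: map_continuous => i; rewrite /coord /= /lift_coord; case: (_ == _) => //.
  apply: (rcontinuous_add (fun x => Rmax (F i x) 0)); first exact: rcontinuous_max0.
  by apply: (lipschitz_rcontinuous _ 1 Rle_0_1) => x y; rewrite Rmult_1_l; apply: set_dist_abs.
Qed.

Let Lc := INR n * (lam + 1).
Let Ls := INR n * s.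

Lemma lift_asymp x y : dist (lift x) (lift y) <= Lc * dist x y + Ls.
Proof.
  have := map_asymp lift (lam + 1) s lift_coord_asymp x y.
  by rewrite /Lc /Ls; lra.
Qed.

Lemma set_dist_le_norm x : set_dist A x <= dist origin (lift x).
Proof.
  have [il Hil] := last_index n hn.
  have := coord_le_norm (lift x) il; rewrite /coord /= /lift_coord Hil eqxx.
  have := Rmax_r (F il x) 0; have := set_dist_ge0 HX A a0 x.
  by move=> H1 H2; rewrite Rabs_right; lra.
Qed.

Lemma phi_norm_near x a : dist x (proj1_sig a) < set_dist A x + 1 ->
  dist origin (phi a) <= dist origin (lift x) + Lc * (set_dist A x + 1) + Ls.
Proof.
  move=> Ha; rewrite -lift_ext.
  have := dist_tri halfspace_metric origin (lift x) (lift (proj1_sig a)).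
  have := lift_asymp x (proj1_sig a).
  have : Lc * dist x (proj1_sig a) <= Lc * (set_dist A x + 1).
    by apply: Rmult_le_compat_l; [apply: Rmult_le_pos; [exact: pos_INR | lra] | lra].
  lra.
Qed.

Lemma lift_proper : proper_map lift.
Proof.
  apply: (proper_of_coercive HPX halfspace_metric lift (proj1_sig a0) origin lift_cont) => M.
  pose M' := M + Lc * (M + 1) + Ls.
  have [R' HR'] := compact_bounded (subspace_metric HX A) _ a0
                     (phi_proper (closed_ball origin M') (halfspace_proper n _ _)).
  exists (R' + M + 1) => x Hx.
  have [a Ha] := set_dist_approx HX A a0 x 1 Rlt_0_1.
  have Hd := set_dist_le_norm x.
  have HL : Lc * (set_dist A x + 1) <= Lc * (M + 1).
    by apply: Rmult_le_compat_l; [apply: Rmult_le_pos; [exact: pos_INR | lra] | lra].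
  have H3 : dist (proj1_sig a0) (proj1_sig a) <= R'.
    by apply: (HR' a); rewrite /closed_ball /M'; have := phi_norm_near x a Ha; lra.
  have := dist_tri HX (proj1_sig a0) (proj1_sig a) x.
  by rewrite (dist_sym HX (proj1_sig a) x); lra.
Qed.

Lemma lift_morA : morA lift.
Proof.
  split; [exact: lift_cont | split; [exact: lift_proper |]].
  exists Lc, Ls; split; first by apply: Rmult_le_pos; [exact: pos_INR | lra].
  by split; [apply: Rmult_le_pos; [exact: pos_INR | lra] | exact: lift_asymp].
Qed.

Lemma lift_nonzero_norm : nonzero_norm (X := subspace X A) phi -> nonzero_norm lift.
Proof.
  move=> Hnz; have [c [b [Hc [Hb Hcb]]]] := Hnz a0 origin.
  have HLc : 0 <= Lc by apply: Rmult_le_pos; [exact: pos_INR | lra].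
  have HLs : 0 <= Ls by apply: Rmult_le_pos; [exact: pos_INR | lra].
  pose K := 1 + c + Lc; pose B := c + Lc + Ls + b.
  apply: (nonzero_norm_of_base HX halfspace_metric lift (proj1_sig a0) origin (c / K) (B / K)).
  - by apply: Rdiv_lt_0_compat; rewrite /K; lra.
  - by apply: div_ge0; rewrite /K /B; lra.
  move=> x; have [a Ha] := set_dist_approx HX A a0 x 1 Rlt_0_1.
  have HN1 := set_dist_le_norm x; have HN2 := phi_norm_near x a Ha.
  have Hpa : dist origin (phi a) >= c * dist (proj1_sig a) (proj1_sig a0) - b.
    by rewrite (dist_sym halfspace_metric); exact: Hcb a.
  have Hxa0 : dist x (proj1_sig a0) <= dist x (proj1_sig a) + dist (proj1_sig a) (proj1_sig a0).
    exact: dist_tri.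
  rewrite (dist_sym halfspace_metric); move: (dist origin (lift x)) HN1 HN2 => N HN1 HN2.
  suff : c * dist x (proj1_sig a0) <= K * N + B.
    have HK : 0 < K by rewrite /K; lra.
    move=> H; apply: Rle_ge; apply: (Rmult_le_reg_r K) => //.
    by rewrite Rmult_minus_distr_r Rmult_assoc (Rmult_comm (dist _ _)) -Rmult_assoc !divK //; lra.
  have : Lc * set_dist A x <= Lc * N by apply: Rmult_le_compat_l.
  have : c * dist x (proj1_sig a0) <= c * (set_dist A x + 1 + dist (proj1_sig a) (proj1_sig a0)).
    by apply: Rmult_le_compat_l; lra.
  have : c * set_dist A x <= c * N by apply: Rmult_le_compat_l; lra.
  rewrite /K /B; nra.
Qed.

End HalfspaceExtension.

Lemma exists_morAt (n : nat) (hn : (1 <= n)%N) (X : MSpace) :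
  is_object X -> exists psi : pt X -> pt (halfspace n), morAt psi.
Proof.
  move=> [HX HPX]; case: (classic (exists x0 : pt X, True)) => [[x0 _]|HXe]; last first.
    have Hno (x : pt X) : False by apply: HXe; exists x.
    exists (fun _ => origin); split; [split; [|split] |].
    - by move=> x; case: (Hno x).
    - by move=> K _ I U _ _; exists nil => x; case: (Hno x).
    - by exists 0, 0; split; [lra | split; [lra | move=> x; case: (Hno x)]].
    - by move=> x; case: (Hno x).
  pose w x (i : 'I_n) := if nat_of_ord i == n.-1 then dist x0 x else 0.
  have Hw x (i : 'I_n) : nat_of_ord i = n.-1 -> 0 <= w x i.
    by move=> Hi; rewrite /w Hi eqxx; apply: dist_ge0.
  pose psi x : pt (halfspace n) := exist _ (w x) (Hw x).
  have Hwl i x y : Rabs (coord (psi x) i - coord (psi y) i) <= 1 * dist x y + 0.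
    rewrite /coord /= /w; case: (_ == _).
    - have := dist_tri HX x0 x y; have := dist_tri HX x0 y x; rewrite (dist_sym HX y x).
      by move=> *; apply: Rabs_le; lra.
    - by rewrite Rminus_diag Rabs_R0; have := dist_ge0 HX x y; lra.
  have Hco x : dist x0 x <= dist origin (psi x).
    have [il Hil] := last_index n hn.
    have := coord_le_norm (psi x) il; rewrite /coord /= /w Hil eqxx.
    by rewrite Rabs_right //; apply/Rle_ge/dist_ge0.
  have Hcont : continuous_map psi.
    apply: map_continuous => i; apply: (lipschitz_rcontinuous _ 1 Rle_0_1) => x y.
    by have := Hwl i x y; lra.
  exists psi; split; [split; [|split] |] => //.
  - apply: (proper_of_coercive HPX halfspace_metric psi x0 origin Hcont) => M.
    by exists M => x Hx; have := Hco x; lra.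
  - exists (INR n * 1), 0; split; first by have := pos_INR n; lra.
    by split=> [|x y]; [lra | have := map_asymp psi 1 0 Hwl x y; lra].
  - apply: (nonzero_norm_of_base HX halfspace_metric psi x0 origin 1 0); [lra | lra | move=> x].
    by rewrite (dist_sym HX) (dist_sym halfspace_metric); have := Hco x; lra.
Qed.

Lemma halfspace_extension (n : nat) (hn : (1 <= n)%N) (X : MSpace) (HXo : is_object X)
  (A : pt X -> Prop) (HA : closed_set A) (phi : pt (subspace X A) -> pt (halfspace n)) :
  morA phi -> exists psi : pt X -> pt (halfspace n),
    [/\ morA psi, (forall a, psi (proj1_sig a) = phi a) & (nonzero_norm phi -> nonzero_norm psi)].
Proof.
  case: HXo => HX HPX [phi_cont [phi_proper [lam [s [Hlam [Hs phi_asymp]]]]]].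
  case: (classic (exists a : {y | A y}, True)) => [[a0 _]|HAe]; last first.
    have [psi [Hpsi Hnz]] := exists_morAt n hn X (conj HX HPX).
    by exists psi; split=> // a; exfalso; apply: HAe; exists a.
  have [F HF] : exists F : 'I_n -> pt X -> R, forall i,
      [/\ rcontinuous (F i), forall x y, Rabs (F i x - F i y) <= lam * dist x y + s &
          forall a, F i (proj1_sig a) = coord (phi a) i].
    apply: (choice (fun i (G : pt X -> R) => [/\ rcontinuous G,
      forall x y, Rabs (G x - G y) <= lam * dist x y + s &
      forall a, G (proj1_sig a) = coord (phi a) i])) => i.
    have [|a b|G [HG1 [HG2 HG3]]] :=
      real_extension HX A HA a0 (fun a => coord (phi a) i) lam s Hlam Hs.
    - move=> a e He; have [d [Hd H]] := phi_cont a e He; exists d; split=> // b Hb.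
      exact: Rle_lt_trans (coord_dist_le _ _ i) (H b Hb).
    - exact: Rle_trans (coord_dist_le _ _ i) (phi_asymp a b).
    - by exists G; split.
  have F_cont i : rcontinuous (F i) by case: (HF i).
  have F_asymp i x y : Rabs (F i x - F i y) <= lam * dist x y + s by case: (HF i).
  have F_ext i a : F i (proj1_sig a) = coord (phi a) i by case: (HF i).
  exists (lift HX A a0 F); split.
  - exact: (lift_morA hn HX HPX A a0 phi phi_proper F lam s Hlam Hs F_cont F_asymp F_ext).
  - exact: (lift_ext HX A a0 phi F F_ext).
  - exact: (lift_nonzero_norm hn HX A a0 phi F lam s Hlam Hs F_asymp F_ext).
Qed.

Theorem theorem4p3 (n : nat) (hn : (1 <= n)%N) :
  is_object (halfspace n) /\ AE_A (halfspace n) /\ AE_At (halfspace n).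
Proof.
  split; first exact: halfspace_object.
  split=> X HXo A HA phi.
  - by move=> Hphi; have [psi [? ? _]] := halfspace_extension n hn X HXo A HA phi Hphi; exists psi.
  - move=> [Hphi Hnz]; have [psi [? ? Hpsi]] := halfspace_extension n hn X HXo A HA phi Hphi.
    by exists psi; do 2?split=> //; apply: Hpsi.
Qed.
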